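(* Consider the following network model. Let $q$ be a prime power, $K\ge1$, $L\ge1$, $N_{\mathrm S}\ge K$, $N_{\mathrm R}\ge1$. A source S draws $N_{\mathrm S}$ coefficient vectors i.i.d. uniformly from $\mathbb{F}_q^K$ and broadcasts one packet per vector. Each packet is received by the destination D and by each relay $\mathrm R_j$ ($j=1,\dots,L$) according to erasure events that are independent of the coefficients. Relay $\mathrm R_j$, having received $m_j$ packets with coefficient matrix $\mathbf{C}_{\mathrm S\to\mathrm R_j}\in\mathbb{F}_q^{m_j\times K}$, draws $\mathbf{G}_j\in\mathbb{F}_q^{N_{\mathrm R}\times m_j}$ with i.i.d. uniform entries (independent of everything else) and transmits the $N_{\mathrm R}$ rows of $\mathbf{G}_j\mathbf{C}_{\mathrm S\to\mathrm R_j}$; D receives $m'_j$ of them. D stacks the $m_{\mathrm D}$ coefficient vectors received directly from S and all $m'=\sum_j m'_j$ recoded vectors received from the relays into the matrix $\mathbf{C}_{\mathrm D}$. Let $m$ be the number of distinct source packets received by at least one relay and $m_{\mathrm{RD}}$ the number of those also received by D. Let $X$ be the event $\operatorname{rank}(\mathbf{C}_{\mathrm D})=K$. Then, conditional on the erasure pattern (so that $m,m_{\mathrm D},m_{\mathrm{RD}},m'_1,\dots,m'_L$ are fixed), $$\Pr[X]\le \mathbb{P}^{(2)}\big(m'+m_{\mathrm D},\; m-m_{\mathrm{RD}}+m_{\mathrm D},\; m_{\mathrm D};\,K\big),$$ where for nonnegative integers $m_1,m_2\ge m_{12}$, $$\mathbb{P}^{(2)}(m_1,m_2,m_{12};K)=\sum_{i=\max(0,\,K-m_1+m_{12},\,K-m_2+m_{12})}^{\min(m_{12},K)}\mathbb{P}_i(m_{12},K)\,\mathbb{P}(m_1-m_{12},K-i)\,\mathbb{P}(m_2-m_{12},K-i),$$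 with $\mathbb{P}(a,b)=\prod_{i=0}^{b-1}(1-q^{i-a})$ and $\mathbb{P}_r(a,b)=q^{-a(b-r)}\prod_{i=0}^{r-1}\frac{q^{b-i}-1}{q^{r-i}-1}\prod_{i=0}^{r-1}(1-q^{i-a})$.
   Context: $\mathbb{P}(a,b)$ is the probability that an $a\times b$ matrix with i.i.d. uniform entries over $\mathbb{F}_q$ has rank $b$, and $\mathbb{P}_r(a,b)$ the probability it has rank $r$. $\mathbb{P}^{(2)}(m_1,m_2,m_{12};K)$ is the probability that two uniformly random matrices with $m_1$ and $m_2$ rows and $K$ columns, sharing exactly $m_{12}$ common rows, are simultaneously of rank $K$. *)

From mathcomp Require Import all_boot all_order all_algebra.
Set Implicit Arguments. Unset Strict Implicit. Unset Printing Implicit Defensive.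
Import Order.TTheory GRing.Theory Num.Theory.
Local Open Scope ring_scope.

(* P(a,b) = prod_{i=0}^{b-1} (1 - q^(i-a)) : probability that an a x b
   uniform matrix over F_q has rank b. *)
Definition Pfull (q a b : nat) : rat :=
  \prod_(i < b) (1 - (q%:R : rat) ^ (i%:Z - a%:Z)).

Definition Prank (q a b r : nat) : rat :=
  (q%:R : rat) ^ (- (a%:Z * (b%:Z - r%:Z)))
  * (\prod_(i < r) (((q%:R : rat) ^ (b%:Z - i%:Z) - 1)
                     / ((q%:R : rat) ^ (r%:Z - i%:Z) - 1)))
  * \prod_(i < r) (1 - (q%:R : rat) ^ (i%:Z - a%:Z)).

(* P^(2)(m1,m2,m12;K); the lower summation bound
   max(0, K-m1+m12, K-m2+m12) is written with truncated nat subtraction. *)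
Definition P2 (q m1 m2 m12 K : nat) : rat :=
  \sum_(maxn ((K + m12) - m1) ((K + m12) - m2) <= i < (minn m12 K).+1)
     Prank q m12 K i * Pfull q (m1 - m12) (K - i) * Pfull q (m2 - m12) (K - i).

Definition subrows (F : finFieldType) (N K : nat) (A : {set 'I_N})
  (C : 'M[F]_(N, K)) : 'M[F]_(#|A|, K) :=
  rowsub (fun i : 'I_#|A| => enum_val i) C.

(* Coefficient matrix C_D at the destination, given the source coefficient
   matrix C (N_S x K), the relay recoding matrices G j (N_R x m_j), the
   set AD of source packets received directly by D, the sets A j of source
   packets received by relay j, and the sets B j of relay-j packets
   received by D. *)
Definition CD (F : finFieldType) (NS NR K L : nat) (AD : {set 'I_NS})
  (A : 'I_L -> {set 'I_NS}) (B : 'I_L -> {set 'I_NR})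
  (C : 'M[F]_(NS, K))
  (G : {dffun forall j : 'I_L, 'M[F]_(NR, #|A j|)}) :=
  col_mx (subrows AD C)
    (\mxcol_(j < L) subrows (B j) (G j *m subrows (A j) C)).
Arguments CD {F NS NR K L} AD A B C G.

Definition PrX (F : finFieldType) (NS NR K L : nat) (AD : {set 'I_NS})
  (A : 'I_L -> {set 'I_NS}) (B : 'I_L -> {set 'I_NR}) : rat :=
  (#|[set x : 'M[F]_(NS, K) * {dffun forall j : 'I_L, 'M[F]_(NR, #|A j|)}
        | \rank (CD AD A B x.1 x.2) == K]|%:R)
  / (#|{: 'M[F]_(NS, K) * {dffun forall j : 'I_L, 'M[F]_(NR, #|A j|)}}|%:R).
Arguments PrX F {NS NR} K {L} AD A B.

(* Every row of C_D lies both in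
   V_D + V_R and in V_D + V_T, where V_D is spanned by the m_D rows of C that D
   receives directly, V_R by the m' recoded rows, and V_T by the m - m_RD rows
   of C that reach some relay but not D; so C_D has full rank only if both
   sums are all of F_q^K.
   If V has dimension r, then u M lies in V with probability at least q^(r-K)
   for a uniform row u and any matrix M.  Hence, for h nondecreasing, the
   expectation of h (dim) after adding n independent such vectors to V is at
   most the expectation of h after n steps, from dim V, of the Markov chain
   that stays at r with probability q^(r-K) and otherwise moves to r+1.  From
   r this chain reaches K in n steps with probability P(n, K-r); from 0 it is
   at i with probability P_i(n, K).
   For fixed C the recoded rows are such vectors, so the probability that
   V_D + V_R is full is bounded by a function of dim V_D; averaging over the
   relay-only rows of C and then over the direct ones yields P^(2). *)

From mathcomp Require Import all_boot all_order all_algebra.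
From mathcomp Require Import zify ring lra.
Set Implicit Arguments. Unset Strict Implicit. Unset Printing Implicit Defensive.
Import Order.TTheory GRing.Theory Num.Theory.
Local Open Scope ring_scope.

Definition nondecreasing_seq (h : nat -> rat) := forall r, h r <= h r.+1.

Lemma nondecreasing_seqM f h : (forall r, 0 <= f r) -> (forall r, 0 <= h r) ->
  nondecreasing_seq f -> nondecreasing_seq h -> nondecreasing_seq (fun r => f r * h r).
Proof. by move=> f_ge0 h_ge0 f_nd h_nd r; apply: ler_pM. Qed.

Section FullRankProbabilities.
Variable q : nat.
Local Notation Q := (q%:R : rat).

Lemma Pfull0 a : Pfull q a 0 = 1.
Proof. by rewrite /Pfull big_ord0. Qed.

Lemma Pfull_eq0 a b : (a < b)%N -> Pfull q a b = 0.
Proof. by move=> ab; rewrite /Pfull (bigD1 (Ordinal ab)) //= subrr expr0z subrr mul0r. Qed.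

Lemma Prank_eq0 a b r : (a < r)%N -> Prank q a b r = 0.
Proof.
move=> ar; rewrite /Prank [X in _ * X](bigD1 (Ordinal ar)) //=.
by rewrite subrr expr0z subrr mul0r mulr0.
Qed.

Lemma Prank00 b : Prank q 0 b 0 = 1.
Proof. by rewrite /Prank !big_ord0 mul0r oppr0 expr0z !mulr1. Qed.

Lemma P2E K m1 m2 mD :
  P2 q (m1 + mD) (m2 + mD) mD K =
  \sum_(i < K.+1) Prank q mD K i * (Pfull q m1 (K - i) * Pfull q m2 (K - i)).
Proof.
rewrite /P2 !subnDr !addnK.
set lo := maxn _ _; set hi := (minn mD K).+1.
pose G i := Prank q mD K i * Pfull q m1 (K - i) * Pfull q m2 (K - i).
have G_lo i : (i < lo)%N -> G i = 0.
  rewrite /lo /G => ilo; case: (ltnP i (K - m1)) => [i_m1 | m1_i].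
    by rewrite (Pfull_eq0 (a := m1)) ?mulr0 ?mul0r //; lia.
  by rewrite (Pfull_eq0 (a := m2)) ?mulr0 //; lia.
have G_hi i : (hi <= i)%N -> (i <= K)%N -> G i = 0.
  by rewrite /hi /G => hi_i iK; rewrite Prank_eq0 ?mul0r //; lia.
rewrite (eq_bigr (fun i : 'I_K.+1 => G i)) => [|i _]; last by rewrite /G mulrA.
rewrite -(big_mkord xpredT G).
have [lo_hi | hi_lo] := leqP lo hi; last first.
  rewrite [LHS]big_geq 1?ltnW // big1_seq // => i /andP [_].
  rewrite mem_index_iota => /andP [_ iK].
  by case: (ltnP i lo) => [ilo | ?]; [exact: G_lo | apply: G_hi; lia].
rewrite [RHS](big_cat_nat _ (n := lo)) //=; last by lia.
rewrite [X in _ = _ + X](big_cat_nat _ (n := hi) (p := K.+1)) //=; last by rewrite /hi; lia.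
rewrite [X in _ = X + _]big1_seq ?add0r => [|i /andP [_]]; last first.
  by rewrite mem_index_iota => /andP [_ ilo]; exact: G_lo.
rewrite [X in _ = _ + X]big1_seq ?addr0 // => i /andP [_].
by rewrite mem_index_iota => /andP [hi_i iK]; apply: G_hi.
Qed.

Hypothesis q_gt1 : (1 < q)%N.

Lemma qR_neq0 : Q != 0. Proof. by rewrite pnatr_eq0; lia. Qed.

Lemma qR_gt1 : 1 < Q. Proof. by rewrite ltr1n. Qed.

Lemma qR_expX_neq0 n : Q ^+ n != 0. Proof. exact: expf_neq0 qR_neq0. Qed.

Lemma qR_expz_subn (a b : nat) : Q ^ (a%:Z - b%:Z) = Q ^+ a / Q ^+ b.
Proof. by rewrite expfzDr ?qR_neq0 // -exprnN. Qed.

Lemma qR_expz_opp_mul (a b c : nat) : (c <= b)%N ->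
  Q ^ (- (a%:Z * (b%:Z - c%:Z))) = (Q ^+ (a * (b - c)))^-1.
Proof. by move=> cb; rewrite subzn // -PoszM -exprnN. Qed.

Lemma prod_lift0_subzSS (f : int -> rat) a r :
  \prod_(i < r) f ((lift ord0 i)%:Z - a.+1%:Z) = \prod_(i < r) f (i%:Z - a%:Z).
Proof. by apply: eq_bigr => i _; rewrite lift0; congr f; lia. Qed.

Lemma PfullSS a d :
  Pfull q a.+1 d.+1 = (Q ^+ d.+1)^-1 * Pfull q a d.+1 + (1 - (Q ^+ d.+1)^-1) * Pfull q a d.
Proof.
rewrite /Pfull big_ord_recl big_ord_recr /= (prod_lift0_subzSS (fun z => 1 - Q ^ z)).
rewrite !qR_expz_subn !exprS expr0.
by field; rewrite qR_neq0 !qR_expX_neq0.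
Qed.

Lemma PrankS0 a b : Prank q a.+1 b 0 = (Q ^+ b)^-1 * Prank q a b 0.
Proof.
rewrite /Prank !big_ord0 !mulr1 subr0 -!PoszM -!exprnN -invfM -exprD.
by rewrite mulSn addnC.
Qed.

Lemma PrankSS a b r : (r < b)%N ->
  Prank q a.+1 b r.+1 = (Q ^+ (b - r.+1))^-1 * Prank q a b r.+1
                        + (1 - (Q ^+ (b - r))^-1) * Prank q a b r.
Proof.
move=> rb; rewrite /Prank !prodf_div.
rewrite [\prod_(i < r.+1) (Q ^ (b%:Z - i%:Z) - 1)]big_ord_recr /=.
rewrite [\prod_(i < r.+1) (Q ^ (r.+1%:Z - i%:Z) - 1)]big_ord_recl /=.
rewrite [\prod_(i < r.+1) (1 - Q ^ (i%:Z - a.+1%:Z))]big_ord_recl /=.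
rewrite [\prod_(i < r.+1) (1 - Q ^ (i%:Z - a%:Z))]big_ord_recr /=.
rewrite (prod_lift0_subzSS (fun z => 1 - Q ^ z)).
have -> : \prod_(i < r) (Q ^ (r.+1%:Z - (lift ord0 i)%:Z) - 1) =
          \prod_(i < r) (Q ^ (r%:Z - i%:Z) - 1).
  by apply: eq_bigr => i _; rewrite lift0; congr (Q ^ _ - 1); lia.
set Z := \prod_(i < r) (Q ^ (r%:Z - i%:Z) - 1).
have qRX_sub1_neq0 n : (0 < n)%N -> Q ^+ n - 1 != 0.
  by move=> n0; rewrite subr_eq0 gt_eqF // exprn_egt1 ?qR_gt1 // -lt0n.
have Z_neq0 : Z != 0.
  apply/prodf_neq0 => i _; rewrite qR_expz_subn -expfB //.
  by rewrite qRX_sub1_neq0 // subn_gt0.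
rewrite !qR_expz_opp_mul; try lia.
have [d ->] : exists d, b = (r.+1 + d)%N by exists (b - r.+1)%N; lia.
have -> : (r.+1 + d - r.+1 = d)%N by lia.
have -> : (r.+1 + d - r = d.+1)%N by lia.
rewrite !qR_expz_subn mulSn mulnS !exprD !exprS expr0.
move: (qRX_sub1_neq0 r.+1 isT); rewrite exprS => Qr_neq0.
by field; rewrite Z_neq0 Qr_neq0 qR_neq0 !qR_expX_neq0.
Qed.
End FullRankProbabilities.

Section RankChain.
Variables q K : nat.
Local Notation Q := (q%:R : rat).

Definition full_rank_ind r : rat := (K <= r)%N%:R.

Lemma full_rank_ind_nondecr : nondecreasing_seq full_rank_ind.
Proof. by move=> r; rewrite ler_nat; case: (leqP K r) => //; lia. Qed.

Lemma full_rank_ind_ge0 r : 0 <= full_rank_ind r.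
Proof. exact: ler0n. Qed.

Definition rank_stay_prob r : rat := (Q ^+ (K - r))^-1.

Definition rank_step (h : nat -> rat) r :=
  rank_stay_prob r * h r + (1 - rank_stay_prob r) * h r.+1.

Definition rank_chain n h := iter n rank_step h.

Lemma rank_chainD m n h : rank_chain (m + n) h = rank_chain m (rank_chain n h).
Proof. exact: iterD. Qed.

Lemma rank_chain_scale n c h r :
  rank_chain n (fun s => c * h s) r = c * rank_chain n h r.
Proof.
elim: n r => //= n IHn r.
by rewrite /rank_step !IHn; ring.
Qed.

Hypothesis q_gt1 : (1 < q)%N.

Lemma rank_stay_prob_ge0 r : 0 <= rank_stay_prob r.
Proof. by rewrite invr_ge0 exprn_ge0 // ler0n. Qed.

Lemma rank_stay_prob_le1 r : rank_stay_prob r <= 1.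
Proof. by rewrite invf_le1 ?exprn_gt0 ?exprn_ege1 ?ltr0n ?ler1n //; lia. Qed.

Lemma rank_stay_prob_full : rank_stay_prob K = 1.
Proof. by rewrite /rank_stay_prob subnn expr0 invr1. Qed.

Lemma rank_step_nondecr h : nondecreasing_seq h -> nondecreasing_seq (rank_step h).
Proof.
move=> h_nd r; rewrite /rank_step.
have := rank_stay_prob_ge0 r; have := rank_stay_prob_le1 r.
have := rank_stay_prob_ge0 r.+1; have := rank_stay_prob_le1 r.+1.
have := h_nd r; have := h_nd r.+1; nra.
Qed.

Lemma rank_step_ge0 h : (forall r, 0 <= h r) -> forall r, 0 <= rank_step h r.
Proof.
move=> h_ge0 r; rewrite /rank_step.
have := rank_stay_prob_ge0 r; have := rank_stay_prob_le1 r.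
have := h_ge0 r; have := h_ge0 r.+1; nra.
Qed.

Lemma rank_chain_nondecr n h : nondecreasing_seq h -> nondecreasing_seq (rank_chain n h).
Proof. by move=> h_nd; elim: n => //= n; apply: rank_step_nondecr. Qed.

Lemma rank_chain_ge0 n h : (forall r, 0 <= h r) -> forall r, 0 <= rank_chain n h r.
Proof. by move=> h_ge0; elim: n => //= n; apply: rank_step_ge0. Qed.

Lemma rank_chain_full_rank_ind n r : (r <= K)%N ->
  rank_chain n full_rank_ind r = Pfull q n (K - r).
Proof.
elim: n r => [|n IHn] r rK /=; rewrite /full_rank_ind.
  case: (ltngtP K r) => [Kr|Kr|<-]; [lia | | by rewrite subnn Pfull0].
  by rewrite Pfull_eq0 ?subn_gt0 // leqNgt Kr.
case: (ltngtP K r) => [Kr|Kr|<-]; first lia.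
  have KrS : (K - r = (K - r.+1).+1)%N by lia.
  by rewrite /rank_step !IHn // KrS PfullSS // /rank_stay_prob KrS.
rewrite /rank_step rank_stay_prob_full IHn // subnn !Pfull0.
by rewrite mul1r subrr mul0r addr0.
Qed.

Lemma rank_chain_from0 n h :
  rank_chain n h 0 = \sum_(i < K.+1) Prank q n K i * h i.
Proof.
elim: n h => [|n IHn] h.
  rewrite big_ord_recl /= Prank00 mul1r big1 ?addr0 // => i _.
  by rewrite Prank_eq0 ?mul0r.
rewrite /rank_chain iterSr -/(rank_chain n (rank_step h)) IHn /rank_step.
under eq_bigr do rewrite mulrDr.
rewrite big_split /= big_ord_recl [X in _ + X = _]big_ord_recr /=.
rewrite rank_stay_prob_full subrr !mul0r mulr0 addr0.
rewrite [RHS]big_ord_recl /= PrankS0 -addrA; congr (_ + _).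
  by rewrite /rank_stay_prob subn0; ring.
rewrite -big_split /=; apply: eq_bigr => i _.
by rewrite PrankSS // /rank_stay_prob; ring.
Qed.

Lemma P2_rank_chain m1 m2 mD :
  P2 q (m1 + mD) (m2 + mD) mD K =
  rank_chain mD (fun r => rank_chain m1 full_rank_ind r * rank_chain m2 full_rank_ind r) 0.
Proof.
rewrite P2E rank_chain_from0; apply: eq_bigr => i _.
by rewrite !rank_chain_full_rank_ind // -ltnS.
Qed.
End RankChain.

Section RankIncrement.
Variables (F : finFieldType) (K : nat).
Local Notation q := #|F|.

Lemma card_rV_leq_ker_rank a (N : 'M[F]_(a, K)) :
  (#|{: 'rV[F]_a}| <= #|[set u : 'rV[F]_a | (u *m N == 0)%R]| * q ^ \rank N)%N.
Proof.
set ker := [set u : 'rV[F]_a | u *m N == 0].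
set im := [set u *m N | u in [set: 'rV[F]_a]].
have card_im : (#|im| <= q ^ \rank N)%N.
  have im_sub : im \subset [set z *m row_base N | z in [set: 'rV[F]_(\rank N)]].
    apply/subsetP => _ /imsetP [u _ ->]; apply/imsetP.
    by exists (u *m col_base N); rewrite ?inE // -mulmxA mulmx_base.
  apply: leq_trans (subset_leq_card im_sub) _; apply: leq_trans (leq_imset_card _ _) _.
  by rewrite cardsT card_mx mul1n.
have card_fibre y : y \in im -> (\sum_(u | true && (u *m N == y)) 1)%N = #|ker|.
  case/imsetP => u0 _ ->; rewrite (reindex_inj (addIr u0)) -sum1_card /=.
  by apply: eq_bigl => u; rewrite inE mulmxDl -subr_eq0 addrK.
rewrite -[X in (X <= _)%N]sum1_card.
rewrite (partition_big (fun u => u *m N) (mem im)) => [|u _]; last first.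
  by apply/imsetP; exists u; rewrite ?inE.
rewrite (eq_bigr (fun _ => #|ker|)) => [|y]; last exact: card_fibre.
by rewrite sum_nat_const mulnC leq_mul2l card_im orbT.
Qed.

Lemma mxrank_adds_row m (V : 'M[F]_(m, K)) (w : 'rV[F]_K) :
  \rank (V + <<w>>)%MS = if (w <= V)%MS then \rank V else (\rank V).+1.
Proof.
case: ifP => wV.
  by rewrite (addsmx_idPl _).1 // genmxE.
have le_rank : (\rank (V + <<w>>) <= \rank V + 1)%N.
  apply: leq_trans (mxrank_adds_leqif _ _).1 _.
  by rewrite leq_add2l mxrank_gen rank_leq_row.
suff : (\rank V < \rank (V + <<w>>))%N by lia.
apply: rank_ltmx; rewrite ltmxE addsmxSl /=.
by apply: contraFN wV => /(submx_trans (addsmxSr V _)); rewrite genmxE.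
Qed.

(* [u *m M] lies in [V] iff [u] is in the kernel of [M *m cokermx V], whose
   rank is at most [K - \rank V]. *)
Lemma sum_rank_adds_rowM_le a (M : 'M[F]_(a, K)) m (V : 'M[F]_(m, K)) h :
  nondecreasing_seq h ->
  \sum_(u : 'rV[F]_a) h (\rank (V + <<u *m M>>)%MS)
    <= #|{: 'rV[F]_a}|%:R * rank_step q K h (\rank V).
Proof.
move=> h_nd; set r := \rank V; set N := M *m cokermx V.
set ker := [set u : 'rV[F]_a | u *m N == 0].
have q_gt1 : (1 < q)%N := card_finNzRing_gt1 F.
have rank_uM u : \rank (V + <<u *m M>>)%MS = if u \in ker then r else r.+1.
  by rewrite mxrank_adds_row inE submxE -mulmxA.
have ker_large : #|{: 'rV[F]_a}|%:R * rank_stay_prob q K r <= #|ker|%:R.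
  have rank_N : (\rank N <= K - r)%N.
    by apply: leq_trans (mxrankM_maxr _ _) _; rewrite mxrank_coker.
  rewrite ler_pdivrMr ?exprn_gt0 ?ltr0n 1?ltnW // -natrX -natrM ler_nat.
  apply: leq_trans (card_rV_leq_ker_rank N) _.
  by rewrite leq_mul2l leq_pexp2l ?rank_N ?orbT 1?ltnW.
have -> : \sum_(u : 'rV[F]_a) h (\rank (V + <<u *m M>>)%MS) =
          #|{: 'rV[F]_a}|%:R * h r.+1 - #|ker|%:R * (h r.+1 - h r).
  rewrite (eq_bigr (fun u => h r.+1 - (if u \in ker then h r.+1 - h r else 0))).
    by rewrite sumrB -big_mkcond !sumr_const !mulr_natl.
  by move=> u _; rewrite rank_uM; case: (u \in ker); rewrite ?subr0 // opprB addrC subrK.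
move: ker_large (h_nd r); rewrite -subr_ge0 -[h r <= _]subr_ge0 => s_gap h_gap.
have := mulr_ge0 s_gap h_gap; rewrite /rank_step; lra.
Qed.
End RankIncrement.

Section FfunWith.
Variables (I : finType) (T_ : I -> finType).
Local Notation Om := {dffun forall i : I, T_ i}.

Definition ffun_with (f : Om) i (x : T_ i) : Om := [ffun j => dfwith f x j].

Lemma ffun_with_in (f : Om) i (x : T_ i) : ffun_with f x i = x.
Proof. by rewrite ffunE dfwith_in. Qed.

Lemma ffun_with_out (f : Om) i (x : T_ i) j : i != j -> ffun_with f x j = f j.
Proof. by move=> ij; rewrite ffunE dfwith_out. Qed.

Lemma ffun_withK (f : Om) i (x : T_ i) : ffun_with (ffun_with f x) (f i) = f.
Proof.
apply/ffunP => j; have [<-|ij] := eqVneq i j; first by rewrite ffun_with_in.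
by rewrite !ffun_with_out.
Qed.

Lemma sum_ffun_with i (phi : Om -> rat) :
  #|T_ i|%:R * \sum_f phi f = \sum_f \sum_(x : T_ i) phi (ffun_with f x).
Proof.
pose swap (p : Om * T_ i) := (ffun_with p.1 p.2, p.1 i).
have swapK : involutive swap by move=> [f x]; rewrite /swap /= ffun_with_in ffun_withK.
rewrite (pair_bigA _ (fun f (x : T_ i) => phi (ffun_with f x))) /=.
rewrite [RHS](reindex_inj (inv_inj swapK)) /=.
rewrite (eq_bigr (fun p => phi p.1)) => [|[f x] _]; last by rewrite /= ffun_withK.
rewrite -(pair_bigA _ (fun f (x : T_ i) => phi f)) /= mulr_sumr.
by apply: eq_bigr => f _; rewrite sumr_const mulr_natl.
Qed.

Definition indep_coords (X : Type) (s : seq I) (phi : Om -> X) :=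
  forall f g : Om, (forall j, j \notin s -> f j = g j) -> phi f = phi g.

Lemma indep_coordsW X s t (phi : Om -> X) :
  {subset s <= t} -> indep_coords t phi -> indep_coords s phi.
Proof.
move=> st phi_indep f g fg; apply: phi_indep => j j_notin_t.
by apply: fg; apply: contra j_notin_t; apply: st.
Qed.

Lemma indep_coords_with X s (phi : Om -> X) f i (x : T_ i) :
  i \in s -> indep_coords s phi -> phi (ffun_with f x) = phi f.
Proof.
move=> i_in_s phi_indep; apply: phi_indep => j j_notin_s.
by rewrite ffun_with_out //; apply: contraNneq j_notin_s => <-.
Qed.
End FfunWith.

Section IndependentRankIncrements.
Variables (F : finFieldType) (K : nat) (I : finType) (T_ : I -> finType).
Variables (n : I -> nat) (R : forall i, T_ i -> 'M[F]_K).
Local Notation Om := {dffun forall i : I, T_ i}.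
Local Notation q := #|F|.

Hypothesis sum_rank_adds_R_le : forall i (V : 'M[F]_K) h, nondecreasing_seq h ->
  \sum_(x : T_ i) h (\rank (V + R x)%MS) <= #|T_ i|%:R * rank_chain q K (n i) h (\rank V).

Lemma sum_rank_adds_coord_le i (V : Om -> 'M[F]_K) (phi : Om -> nat -> rat) :
  indep_coords [:: i] V -> indep_coords [:: i] phi -> (forall f, nondecreasing_seq (phi f)) ->
  \sum_f phi f (\rank (V f + R (f i))%MS)
    <= \sum_f rank_chain q K (n i) (phi f) (\rank (V f)).
Proof.
move=> V_indep phi_indep phi_nd.
have [f0 _ | Om0] := pickP (fun _ : Om => true); last first.
  by rewrite [X in X <= _]big_pred0 // [X in _ <= X]big_pred0.
have T_pos : (0 : rat) < #|T_ i|%:R by rewrite ltr0n; apply/card_gt0P; exists (f0 i).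
rewrite -(ler_pM2l T_pos) !sum_ffun_with; apply: ler_sum => f _.
have i_in : i \in [:: i] by rewrite inE.
under eq_bigr do rewrite ffun_with_in (indep_coords_with _ _ i_in V_indep)
  (indep_coords_with _ _ i_in phi_indep).
under [X in _ <= X]eq_bigr do rewrite (indep_coords_with _ _ i_in V_indep)
  (indep_coords_with _ _ i_in phi_indep).
by rewrite sumr_const -mulr_natl; apply: sum_rank_adds_R_le.
Qed.

Lemma sum_rank_adds_indep_le (s : seq I) (V : Om -> 'M[F]_K) (phi : Om -> nat -> rat) :
  uniq s -> indep_coords s V -> indep_coords s phi -> (forall f, nondecreasing_seq (phi f)) ->
  \sum_f phi f (\rank (V f + \sum_(j <- s) R (f j))%MS)
    <= \sum_f rank_chain q K (\sum_(j <- s) n j) (phi f) (\rank (V f)).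
Proof.
elim: s V phi => [|i s IHs] V phi /=.
  by move=> *; apply: ler_sum => f _; rewrite !big_nil (addsmx0 _ (V f)).1.
case/andP=> i_notin_s s_uniq V_indep phi_indep phi_nd.
have sub_cons : {subset s <= i :: s} by move=> j; rewrite inE orbC => ->.
have i_sub_cons : {subset [:: i] <= i :: s} by move=> j; rewrite !inE => ->.
under eq_bigr do rewrite big_cons addsmxA.
under [X in _ <= X]eq_bigr do rewrite big_cons rank_chainD.
have Vi_indep : indep_coords s (fun f => V f + R (f i))%MS.
  by move=> f g fg; rewrite (indep_coordsW sub_cons V_indep fg) fg.
apply: le_trans (IHs _ _ s_uniq Vi_indep (indep_coordsW sub_cons phi_indep) phi_nd) _.
apply: sum_rank_adds_coord_le => [|f g fg|f]; first exact: indep_coordsW i_sub_cons V_indep.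
  by rewrite (indep_coordsW i_sub_cons phi_indep fg).
exact (rank_chain_nondecr K (card_finNzRing_gt1 F) _ (phi_nd f)).
Qed.

Lemma sum_rank_adds_le (s : seq I) (V : 'M[F]_K) h : uniq s -> nondecreasing_seq h ->
  \sum_(f : Om) h (\rank (V + \sum_(j <- s) R (f j))%MS)
    <= #|{: Om}|%:R * rank_chain q K (\sum_(j <- s) n j) h (\rank V).
Proof.
move=> s_uniq h_nd; rewrite mulr_natl -sumr_const.
by apply: (sum_rank_adds_indep_le (V := fun=> V) (phi := fun=> h)).
Qed.
End IndependentRankIncrements.

Lemma bijective_mx_rows (T : Type) m a :
  bijective (fun g : {dffun forall i : 'I_m, 'rV[T]_a} => \matrix_i g i).
Proof.
exists (fun C => [ffun i => row i C]) => [g | C].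
  by apply/ffunP => i; rewrite ffunE rowK.
by apply/row_matrixP => i; rewrite rowK ffunE.
Qed.

Lemma sum_mx_rows (T : finType) m a (phi : 'M[T]_(m, a) -> rat) :
  \sum_C phi C = \sum_(g : {dffun forall i : 'I_m, 'rV[T]_a}) phi (\matrix_i g i).
Proof.
by rewrite (reindex _ (onW_bij _ (bijective_mx_rows T m a))).
Qed.

Section RowsSpan.
Variables (F : fieldType) (K : nat).

Definition rows_span N (S : {set 'I_N}) (C : 'M[F]_(N, K)) := (\sum_(i in S) <<row i C>>)%MS.

Lemma row_sub_rows_span N (S : {set 'I_N}) C i : i \in S -> (row i C <= rows_span S C)%MS.
Proof. by move=> iS; apply: (sumsmx_sup i) => //; rewrite genmxE. Qed.

Lemma mxcol_sub L (p_ : 'I_L -> nat) (B_ : forall j, 'M[F]_(p_ j, K)) m (Y : 'M[F]_(m, K)) :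
  (forall j, (B_ j <= Y)%MS) -> (\mxcol_j B_ j <= Y)%MS.
Proof. by move=> BY; apply/row_subP => i; rewrite row_mxcol (submx_trans (row_sub _ _)). Qed.
End RowsSpan.

Section RandomRows.
Variables (F : finFieldType) (K : nat).
Local Notation q := #|F|.

Lemma rows_span_mx_rowsM N a (S : {set 'I_N}) (g : {dffun forall i : 'I_N, 'rV[F]_a})
    (M : 'M[F]_(a, K)) :
  rows_span S ((\matrix_i g i) *m M) = (\sum_(i <- enum S) <<g i *m M>>)%MS.
Proof. by rewrite /rows_span -big_enum; apply: eq_bigr => i _; rewrite row_mul rowK. Qed.

Lemma sum_rank_adds_rows_span_le N a (M : 'M[F]_(a, K)) (S : {set 'I_N}) (V : 'M[F]_K) h :
  nondecreasing_seq h ->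
  \sum_(X : 'M[F]_(N, a)) h (\rank (V + rows_span S (X *m M))%MS)
    <= #|{: 'M[F]_(N, a)}|%:R * rank_chain q K #|S| h (\rank V).
Proof.
move=> h_nd; rewrite sum_mx_rows -(bij_eq_card (bijective_mx_rows F N a)).
under eq_bigr do rewrite rows_span_mx_rowsM.
rewrite cardE -sum1_size.
exact (@sum_rank_adds_le F K 'I_N (fun=> 'rV[F]_a) (fun=> 1%N) (fun _ u => <<u *m M>>%MS)
  (fun _ V' _ h_nd' => sum_rank_adds_rowM_le M V' h_nd') _ V h (enum_uniq _) h_nd).
Qed.

Lemma sum_rank_rows_span_le N (S : {set 'I_N}) h : nondecreasing_seq h ->
  \sum_(C : 'M[F]_(N, K)) h (\rank (rows_span S C))
    <= #|{: 'M[F]_(N, K)}|%:R * rank_chain q K #|S| h 0.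
Proof.
move=> h_nd; have := sum_rank_adds_rows_span_le 1%:M S 0 h_nd.
by under eq_bigr do rewrite mulmx1 adds0mx; rewrite mxrank0.
Qed.

Lemma sum_rank_rows_span_disjoint_le N (S T : {set 'I_N}) (f h : nat -> rat) :
  [disjoint S & T] -> (forall r, 0 <= f r) -> nondecreasing_seq h ->
  \sum_(C : 'M[F]_(N, K))
      f (\rank (rows_span S C)) * h (\rank (rows_span S C + rows_span T C)%MS)
    <= \sum_(C : 'M[F]_(N, K))
      f (\rank (rows_span S C)) * rank_chain q K #|T| h (\rank (rows_span S C)).
Proof.
move=> ST f_ge0 h_nd; rewrite !sum_mx_rows.
have span_rows S' (g : {dffun forall i : 'I_N, 'rV[F]_K}) :
    rows_span S' (\matrix_i g i) = (\sum_(i <- enum S') <<g i *m 1%:M>>)%MS.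
  by rewrite -rows_span_mx_rowsM mulmx1.
under eq_bigr do rewrite !span_rows.
under [X in _ <= X]eq_bigr do rewrite span_rows -rank_chain_scale.
pose VS (g : {dffun forall i : 'I_N, 'rV[F]_K}) := (\sum_(i <- enum S) <<g i *m 1%:M>>)%MS.
have VS_indep : indep_coords (enum T) VS.
  move=> g g' gg'; apply: eq_big_seq => i; rewrite mem_enum => iS.
  by rewrite gg' // mem_enum (disjointFr ST iS).
rewrite cardE -sum1_size.
apply: (sum_rank_adds_indep_le (R := fun _ u => <<u *m 1%:M>>%MS) (n := fun=> 1%N)
  (fun _ V' _ h_nd' => sum_rank_adds_rowM_le 1%:M V' h_nd') (enum_uniq _) VS_indep).
  by move=> g g' gg'; move: (VS_indep _ _ gg'); rewrite /VS => ->.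
by move=> g r; apply: ler_wpM2l (f_ge0 _) _ _ (h_nd r).
Qed.
End RandomRows.

Lemma card_set_pair_sum (T1 T2 : finType) (P : T1 -> T2 -> bool) :
  #|[set x : T1 * T2 | P x.1 x.2]|%:R = \sum_(x1 : T1) \sum_(x2 : T2) (P x1 x2)%:R :> rat.
Proof.
rewrite pair_bigA -sum1_card natr_sum big_mkcond /=.
by apply: eq_bigr => -[x1 x2] _; rewrite inE; case: P.
Qed.

Section Destination.
Variables (F : finFieldType) (K L NS NR : nat).
Variables (AD : {set 'I_NS}) (A : 'I_L -> {set 'I_NS}) (B : 'I_L -> {set 'I_NR}).
Local Notation q := #|F|.
Local Notation relay_only := ((\bigcup_(j < L) A j) :\: AD).
Local Notation recoders := {dffun forall j : 'I_L, 'M[F]_(NR, #|A j|)}.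

Lemma subrows_sub N (S : {set 'I_N}) C m (Y : 'M[F]_(m, K)) :
  (forall i, i \in S -> (row i C <= Y)%MS) -> (subrows S C <= Y)%MS.
Proof. by move=> SY; apply/row_subP => k; rewrite row_rowsub SY ?enum_valP. Qed.

Definition recoded_span (C : 'M[F]_(NS, K)) (G : recoders) :=
  (\sum_j rows_span (B j) (G j *m subrows (A j) C))%MS.

Lemma direct_rows_sub_span (C : 'M[F]_(NS, K)) m (Y : 'M[F]_(m, K)) :
  (subrows AD C <= rows_span AD C + Y)%MS.
Proof.
by apply: subrows_sub => i iAD; rewrite (submx_trans _ (addsmxSl _ _)) ?row_sub_rows_span.
Qed.

Lemma CD_sub_direct_recoded (C : 'M[F]_(NS, K)) (G : recoders) :
  (CD AD A B C G <= rows_span AD C + recoded_span C G)%MS.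
Proof.
rewrite col_mx_sub direct_rows_sub_span //=.
apply: mxcol_sub => j; apply: submx_trans (addsmxSr _ _).
by apply: (sumsmx_sup j) => //; apply: subrows_sub => r rB; apply: row_sub_rows_span.
Qed.

Lemma CD_sub_direct_relay_only (C : 'M[F]_(NS, K)) (G : recoders) :
  (CD AD A B C G <= rows_span AD C + rows_span relay_only C)%MS.
Proof.
rewrite col_mx_sub direct_rows_sub_span //=.
apply: mxcol_sub => j; apply: submx_trans (rowsub_sub _ _) _.
apply: submx_trans (submxMl _ _) _; apply: subrows_sub => i iAj.
have [iAD | iAD] := boolP (i \in AD).
  by apply: submx_trans (addsmxSl _ _); apply: row_sub_rows_span.
apply: submx_trans (addsmxSr _ _); apply: row_sub_rows_span.
by rewrite inE iAD; apply/bigcupP; exists j.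
Qed.

Lemma full_rank_CD_le (C : 'M[F]_(NS, K)) (G : recoders) :
  ((\rank (CD AD A B C G) == K)%:R : rat) <=
    full_rank_ind K (\rank (rows_span AD C + rows_span relay_only C)%MS) *
    full_rank_ind K (\rank (rows_span AD C + recoded_span C G)%MS).
Proof.
case: eqP => [rankK | _]; last by rewrite mulr_ge0 ?full_rank_ind_ge0.
have := mxrankS (CD_sub_direct_relay_only C G); have := mxrankS (CD_sub_direct_recoded C G).
by rewrite rankK /full_rank_ind => -> ->; rewrite mulr1.
Qed.

Local Notation recoded_chain := (rank_chain q K (\sum_j #|B j|) (full_rank_ind K)).
Local Notation relay_only_chain := (rank_chain q K #|relay_only| (full_rank_ind K)).

Lemma sum_full_rank_recoded_le (C : 'M[F]_(NS, K)) :
  \sum_(G : recoders) full_rank_ind K (\rank (rows_span AD C + recoded_span C G)%MS)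
    <= #|{: recoders}|%:R * recoded_chain (\rank (rows_span AD C)).
Proof.
exact (@sum_rank_adds_le F K 'I_L (fun j => 'M[F]_(NR, #|A j|)) (fun j => #|B j|)
  (fun j G => rows_span (B j) (G *m subrows (A j) C))
  (fun j V h h_nd => sum_rank_adds_rows_span_le (subrows (A j) C) (B j) V h_nd)
  _ _ _ (index_enum_uniq _) (full_rank_ind_nondecr K)).
Qed.

Lemma sum_full_rank_CD_le :
  \sum_(C : 'M[F]_(NS, K)) \sum_(G : recoders) ((\rank (CD AD A B C G) == K)%:R : rat)
  <= (#|{: 'M[F]_(NS, K)}| * #|{: recoders}|)%:R *
       rank_chain q K #|AD| (fun r => recoded_chain r * relay_only_chain r) 0.
Proof.
rewrite natrM mulrAC mulrC.
have q_gt1 : (1 < q)%N := card_finNzRing_gt1 F.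
have chain_ge0 n := rank_chain_ge0 K q_gt1 n (full_rank_ind_ge0 K).
have chain_nd n := rank_chain_nondecr K q_gt1 n (full_rank_ind_nondecr K).
have sum_CD_le (C : 'M[F]_(NS, K)) :
    \sum_(G : recoders) ((\rank (CD AD A B C G) == K)%:R : rat)
    <= #|{: recoders}|%:R * (recoded_chain (\rank (rows_span AD C)) *
         full_rank_ind K (\rank (rows_span AD C + rows_span relay_only C)%MS)).
  apply: le_trans (ler_sum _ (fun G _ => full_rank_CD_le C G)) _.
  rewrite -mulr_sumr mulrA [X in X <= _]mulrC.
  exact: ler_wpM2r (full_rank_ind_ge0 _ _) _ _ (sum_full_rank_recoded_le C).
apply: le_trans (ler_sum _ (fun C _ => sum_CD_le C)) _.
rewrite -mulr_sumr; apply: ler_wpM2l; first exact: ler0n.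
apply: le_trans (sum_rank_rows_span_disjoint_le F K _ _ _) (sum_rank_rows_span_le F K AD _).
- by rewrite disjoints_subset; apply/subsetP => i iAD; rewrite !inE iAD.
- exact: chain_ge0.
- exact: full_rank_ind_nondecr.
- exact: nondecreasing_seqM (chain_ge0 _) (chain_ge0 _) (chain_nd _) (chain_nd _).
Qed.

Lemma PrX_le_rank_chain :
  PrX F K AD A B <= rank_chain q K #|AD| (fun r => recoded_chain r * relay_only_chain r) 0.
Proof.
rewrite /PrX card_prod (card_set_pair_sum (fun C G => \rank (CD AD A B C G) == K)).
rewrite ler_pdivrMr; last first.
  rewrite ltr0n muln_gt0; apply/andP.
  by split; apply/card_gt0P; [exists 0 | exists [ffun=> 0]].
by apply: le_trans sum_full_rank_CD_le _; rewrite mulrC.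
Qed.
End Destination.

Theorem lemma2 (F : finFieldType) (q K L NS NR : nat)
  (hq : #|F| = q) (hK : (1 <= K)%N) (hL : (1 <= L)%N)
  (hNS : (K <= NS)%N) (hNR : (1 <= NR)%N)
  (AD : {set 'I_NS}) (A : 'I_L -> {set 'I_NS}) (B : 'I_L -> {set 'I_NR}) :
  let m := #|\bigcup_(j < L) A j| in
  let mD := #|AD| in
  let mRD := #|AD :&: \bigcup_(j < L) A j| in
  let m' := (\sum_(j < L) #|B j|)%N in
  PrX F K AD A B <= P2 q (m' + mD) (m - mRD + mD) mD K.
Proof.
cbv zeta; subst q.
rewrite setIC -cardsD P2_rank_chain ?card_finNzRing_gt1 //.
exact: PrX_le_rank_chain.
Qed.
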